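(* For every integer $t\ge1$ and every $a\in\{1,\dots,m\}$, $$q^{(a)}_t(\mathbf{z};q,\mathbf{Q})=\sum_{\mathbf{i}\in\{1,\dots,k+\ell\}^t}\mathrm{wt}(\mathbf{i})\,Q_{c(\mathbf{i})}^{a}\,\mathbf{z}_{\mathbf{i}} .$$
   Context: Fix integers $m\ge1$ and $k_1,\dots,k_m,\ell_1,\dots,\ell_m\ge0$; put $k=\sum k_a$, $\ell=\sum\ell_a$, $d_0=0$, $d_a=d_{a-1}+k_a+\ell_a$. For $i\in\{1,\dots,k+\ell\}$: parity $\bar i=\bar0$ if $d_{a-1}<i\le d_{a-1}+k_a$ for some $a$, $\bar i=\bar1$ if $d_a-\ell_a<i\le d_a$ for some $a$; color $c(i)=a$ if $d_{a-1}<i\le d_a$. Let $q,Q_1,\dots,Q_m$ be indeterminates and $z_1,\dots,z_{k+\ell}$ commuting variables (the $z_i$ of parity $\bar0$ are the ''$x$-variables'', those of parity $\bar1$ the ''$y$-variables''); work in $\mathbb{Q}(q,Q_1,\dots,Q_m)[z_1,\dots,z_{k+\ell}]$. For a sequence $\mathbf{i}=(i_1,\dots,i_t)$: $c(\mathbf{i})$ is the color of $\max\{i_1,\dots,i_t\}$; $\mathbf{z}_{\mathbf{i}}=(-1)^{\ell_1(\mathbf{i})}z_{i_1}\cdots z_{i_t}$; $\ell_s(\mathbf{i})$ is the number of entries of parity $\bar s$; $\delta_s(\mathbf{i})$ is the number of distinct values of parity $\bar s$ among the entries, $\delta(\mathbf{i})=\delta_0(\mathbf{i})+\delta_1(\mathbf{i})$.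 Define $$q^{(a)}_t(\mathbf{z};q,\mathbf{Q})=\sum_{1\le i_1\le\cdots\le i_t\le k+\ell}Q_{c(\mathbf{i})}^a(-q^{-1})^{\ell_1(\mathbf{i})-\delta_1(\mathbf{i})}q^{\ell_0(\mathbf{i})-\delta_0(\mathbf{i})}(q-q^{-1})^{\delta(\mathbf{i})-1}\mathbf{z}_{\mathbf{i}}.$$ A sequence $\mathbf{j}=(j_1,\dots,j_t)$ is up-down if there is $p\in\{1,\dots,t\}$ with $j_1<\cdots<j_p$ and $j_p\ge j_{p+1}\ge\cdots\ge j_t$ ($p$ is the position of the first occurrence of the maximum). Its weight is $\mathrm{wt}(\mathbf{j})=0$ if $\mathbf{j}$ is not up-down, and otherwise $\mathrm{wt}(\mathbf{j})=\prod_{r=1}^{p-1}w^{<}(j_r)\prod_{r=p+1}^{t}w^{\ge}(j_r)$, where $w^{<}(j)=-q^{-1}$ if $\bar j=\bar0$, $w^{<}(j)=q$ if $\bar j=\bar1$, $w^{\ge}(j)=q$ if $\bar j=\bar0$, $w^{\ge}(j)=-q^{-1}$ if $\bar j=\bar1$. *)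

From HB Require Import structures.
From mathcomp Require Import all_boot all_order all_algebra.
Set Implicit Arguments. Unset Strict Implicit. Unset Printing Implicit Defensive.
Import Order.TTheory GRing.Theory Num.Theory.

(* Colors a range over 1..m; k a, l a are k_a, l_a (values outside 1..m unused).
   Indices i range over 1..N with N = k + l. Index sequences are seq nat (1-based). *)

Definition dd (k l : nat -> nat) (a : nat) : nat := \sum_(1 <= b < a.+1) (k b + l b).
Definition NN (m : nat) (k l : nat -> nat) : nat := dd k l m.

Definition par0 (m : nat) (k l : nat -> nat) (i : nat) : bool :=
  has (fun a => (dd k l a.-1 < i) && (i <= dd k l a.-1 + k a)) (iota 1 m).
Definition par1 (m : nat) (k l : nat -> nat) (i : nat) : bool :=
  has (fun a => (dd k l a - l a < i) && (i <= dd k l a)) (iota 1 m).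
Definition color (m : nat) (k l : nat -> nat) (i : nat) : nat :=
  (find (fun a => (dd k l a.-1 < i) && (i <= dd k l a)) (iota 1 m)).+1.

Definition maxs (s : seq nat) : nat := \max_(x <- s) x.
Definition colseq m k l (s : seq nat) : nat := color m k l (maxs s).
Definition ell0 m k l (s : seq nat) : nat := count (par0 m k l) s.
Definition ell1 m k l (s : seq nat) : nat := count (par1 m k l) s.
Definition delta0 m k l (s : seq nat) : nat := size (undup (filter (par0 m k l) s)).
Definition delta1 m k l (s : seq nat) : nat := size (undup (filter (par1 m k l) s)).

Local Open Scope ring_scope.

Definition zseq (R : comUnitRingType) m k l (z : nat -> R) (s : seq nat) : R :=
  (-1) ^+ ell1 m k l s * \prod_(x <- s) z x.

(* 0-based tuple entries of 'I_N are turned into 1-based indices *)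
Definition idx (N t : nat) (s : t.-tuple 'I_N) : seq nat := [seq (val x).+1 | x <- s].

Definition qat (R : comUnitRingType) (m : nat) (k l : nat -> nat) (q : R) (Q : nat -> R)
    (z : nat -> R) (a t : nat) : R :=
  \sum_(s : t.-tuple 'I_(NN m k l) | sorted leq (idx s))
    Q (colseq m k l (idx s)) ^+ a
    * (- q^-1) ^+ (ell1 m k l (idx s) - delta1 m k l (idx s))%N
    * q ^+ (ell0 m k l (idx s) - delta0 m k l (idx s))%N
    * (q - q^-1) ^+ (delta0 m k l (idx s) + delta1 m k l (idx s)).-1
    * zseq m k l z (idx s).

Definition updown (s : seq nat) : bool :=
  has (fun p => sorted ltn (take p s) && sorted (fun x y => y <= x)%N (drop p.-1 s))
      (iota 1 (size s)).

Definition peak (s : seq nat) : nat := (index (maxs s) s).+1.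

Definition wlt (R : comUnitRingType) m k l (q : R) (j : nat) : R :=
  if par0 m k l j then - q^-1 else if par1 m k l j then q else 0.
Definition wge (R : comUnitRingType) m k l (q : R) (j : nat) : R :=
  if par0 m k l j then q else if par1 m k l j then - q^-1 else 0.

Definition wt (R : comUnitRingType) m k l (q : R) (s : seq nat) : R :=
  if updown s then
    (\prod_(j <- take (peak s).-1 s) wlt m k l q j) * \prod_(j <- drop (peak s) s) wge m k l q j
  else 0.

(* Group the sequences on the right by their sorted rearrangement: the colour and the
   monomial only depend on the multiset of indices, so it suffices to show that for a weakly
   increasing w the sum of wt over the distinct rearrangements of w is the coefficient
   (-q^-1)^(l1-d1) q^(l0-d0) (q-q^-1)^(d-1) of the left side.  Induct on the number of distinct
   entries: if v is the least entry of w, of multiplicity r, and y runs over the rearrangements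
   of the other entries, the only rearrangements of w that can be up-down are v y v^(r-1) and
   y v^r, with weights wt(y) w<(v) w>=(v)^(r-1) and wt(y) w>=(v)^r.  As w<(v) + w>=(v) = q - q^-1
   for either parity of v, this is exactly how the closed form changes when v^r is adjoined. *)

From HB Require Import structures.
From mathcomp Require Import all_boot all_order all_algebra.
From mathcomp Require Import ring zify.
Import GRing.Theory.
Set Implicit Arguments. Unset Strict Implicit.

Section UpDownSequences.

Local Notation geqn := (fun x y : nat => y <= x).

Lemma filter_predC1_gt v s : all (fun x => v < x) s -> filter (predC1 v) s = s.
Proof. by move=> /allP gt_s; apply/all_filterP/allP=> x /gt_s /gtn_eqF /= ->. Qed.

Lemma sorted_ltn_rcons a M : sorted ltn (rcons a M) -> all (fun x => x < M) a.
Proof.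
by rewrite -rev_sorted rev_rcons -all_rev => /(order_path_min (rev_trans ltn_trans)).
Qed.

Lemma updown_peak a M b : sorted ltn (rcons a M) -> sorted geqn (M :: b) ->
  [/\ updown (a ++ M :: b), maxs (a ++ M :: b) = M & peak (a ++ M :: b) = (size a).+1].
Proof.
move=> sa sb; have lt_aM := sorted_ltn_rcons sa.
have ge_bM : all (geqn M) b := order_path_min (rev_trans leq_trans) sb.
have max_M : maxs (a ++ M :: b) = M.
  apply/eqP; rewrite eqn_leq; apply/andP; split.
    apply/bigmax_leqP_seq=> x; rewrite mem_cat inE.
    by case/or3P=> [/(allP lt_aM)/ltnW | /eqP-> | /(allP ge_bM)].
  by rewrite (@leq_bigmax_seq _ _ xpredT (fun x => x)) // mem_cat mem_head orbT.
split=> //.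
  apply/hasP; exists (size a).+1; first by rewrite mem_iota size_cat /= addnS ltnS leq_addr.
  by rewrite /= take_cat ltnNge leqnSn /= subSnn /= take0 cats1 sa drop_size_cat.
have M_notin_a : M \notin a by apply/negP=> /(allP lt_aM); rewrite ltnn.
by rewrite /peak max_M index_cat (negPf M_notin_a) /= eqxx addn0.
Qed.

Lemma updownP s : reflect
  (exists a M b, [/\ s = a ++ M :: b, sorted ltn (rcons a M) & sorted geqn (M :: b)])
  (updown s).
Proof.
apply: (iffP hasP) => [[p]|[a [M [b [-> sa sb]]]]]; last first.
  by apply/hasP; have [] := updown_peak sa sb.
rewrite mem_iota => /andP[p_gt0 p_le] /andP[sa sb].
case: p p_gt0 p_le sa sb => // n _; rewrite add1n ltnS => n_lt sa sb.
exists (take n s), (nth 0 s n), (drop n.+1 s).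
by rewrite -(take_nth 0 n_lt) -(drop_nth 0 n_lt) cat_take_drop.
Qed.

Lemma updown_filter (p : pred nat) s : updown s -> p (maxs s) -> updown (filter p s).
Proof.
case/updownP=> a [M [b [-> sa sb]]]; have [_ -> _] := updown_peak sa sb => pM.
have -> : filter p (a ++ M :: b) = filter p a ++ M :: filter p b.
  by rewrite filter_cat /= pM.
have [] // := @updown_peak (filter p a) M (filter p b).
  by have := sorted_filter ltn_trans p sa; rewrite filter_rcons pM.
by have := sorted_filter (rev_trans leq_trans) p sb; rewrite /= pM.
Qed.

Lemma path_geq_nseq u n v : v <= u -> path geqn u (nseq n v).
Proof. by elim: n u => //= n IH u vu; rewrite vu IH. Qed.

Lemma sorted_leq_nseq_filter v w : sorted leq w -> all (leq v) w ->
  w = nseq (count_mem v w) v ++ filter (predC1 v) w.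
Proof.
elim: w => //= h t IH st /andP[vh vt].
case: (ltngtP v h) vh => // [lt_vh | <-] _; last first.
  by rewrite add1n /= -IH // (path_sorted st).
have gt_t : all (fun x => v < x) t.
  by apply/allP=> x /(allP (order_path_min leq_trans st)); apply: leq_trans.
have /count_memPn -> : v \notin t by apply/negP=> /(allP gt_t); rewrite ltnn.
by rewrite /= filter_predC1_gt.
Qed.

Lemma sorted_geq_filter_nseq v w : sorted geqn w -> all (leq v) w ->
  w = filter (predC1 v) w ++ nseq (count_mem v w) v.
Proof.
rewrite -rev_sorted -all_rev => /sorted_leq_nseq_filter /[apply].
by rewrite count_rev filter_rev => /(congr1 rev); rewrite revK rev_cat revK rev_nseq.
Qed.

Lemma updown_split_min v x : updown x -> all (leq v) x -> v < maxs x ->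
  exists2 e, e <= 1 & x = nseq e v ++ filter (predC1 v) x ++ nseq (count_mem v x - e) v.
Proof.
case/updownP=> a [M [b [-> sa sb]]]; have [_ -> _] := updown_peak sa sb.
rewrite all_cat /= => /and3P[va _ vb] vM.
have sa' : sorted ltn a by move: sa; rewrite -cats1 => /cat_sorted2[].
have ea := sorted_leq_nseq_filter (sub_sorted ltnW sa') va.
have eb := sorted_geq_filter_nseq (path_sorted sb) vb.
exists (count_mem v a).
  by rewrite count_uniq_mem ?(sorted_uniq ltn_trans ltnn) ?leq_b1.
rewrite count_cat /= (gtn_eqF vM) add0n addKn filter_cat /= (gtn_eqF vM) /=.
by rewrite {1}ea {1}eb -!catA.
Qed.

End UpDownSequences.

Section BigRetract.
Variables (V : nmodType) (T1 T2 : eqType).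

Lemma big_retract (s : seq T1) (L : seq T2) (g : T2 -> T1) (h : T1 -> T2) (F : T2 -> V) :
  uniq s -> uniq L -> {in L, cancel g h} -> {in L, forall y, g y \in s} ->
  {in s, forall x, x = g (h x) -> h x \in L} ->
  (\sum_(x <- s) (if x == g (h x) then F (h x) else 0) = \sum_(y <- L) F y)%R.
Proof.
move=> uniq_s uniq_L gK g_s h_L; rewrite -big_mkcond -big_filter.
rewrite -(eq_big_seq _ (fun y yL => congr1 F (gK y yL))) -(big_map g xpredT (F \o h)).
apply: perm_big; apply: uniq_perm; first exact: filter_uniq.
  by rewrite map_inj_in_uniq //; apply: can_in_inj gK.
move=> x; rewrite mem_filter; apply/andP/mapP => [[/eqP x_gh xs]|[y yL ->]].
  by exists (h x); [apply: h_L | ].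
by rewrite gK // eqxx g_s.
Qed.

End BigRetract.

Section UpDownWeights.
Variables (R : comUnitRingType) (m : nat) (k l : nat -> nat) (q : R).
Local Open Scope ring_scope.
Local Notation wl := (wlt m k l q).
Local Notation wg := (wge m k l q).
Local Notation WT := (wt m k l q).
Local Notation geqn := (fun x y : nat => (y <= x)%N).

Lemma prod_nseq (F : nat -> R) n v : \prod_(j <- nseq n v) F j = F v ^+ n.
Proof. by rewrite big_nseq iter_mulr_1. Qed.

Lemma wt_peak a M b : sorted ltn (rcons a M) -> sorted geqn (M :: b) ->
  WT (a ++ M :: b) = \prod_(j <- a) wl j * \prod_(j <- b) wg j.
Proof.
move=> sa sb; have [ud _ pk] := updown_peak sa sb.
by rewrite /wt ud pk /= take_size_cat // drop_cat ltnNge leqnSn /= subSnn /= drop0.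
Qed.

Lemma wt_strip_min v e y n : (e <= 1)%N -> y != [::] -> all (fun x => v < x)%N y ->
  WT (nseq e v ++ y ++ nseq n v) = wl v ^+ e * wg v ^+ n * WT y.
Proof.
move=> e_le1 y_nil gt_y.
case: (boolP (updown y)) => [/updownP[a [M [b [ey sa sb]]]] | not_ud].
  move: gt_y; rewrite ey all_cat /= => /and3P[gt_a vM gt_b].
  have -> : nseq e v ++ (a ++ M :: b) ++ nseq n v = (nseq e v ++ a) ++ M :: (b ++ nseq n v).
    by rewrite -!catA.
  have sa' : sorted ltn (rcons (nseq e v ++ a) M).
    case: e e_le1 => [_|[_|//]] //=.
    by rewrite path_min_sorted // all_rcons; apply/andP.
  have sb' : sorted geqn (M :: b ++ nseq n v).
    rewrite /= cat_path -/(sorted geqn (M :: b)) sb path_geq_nseq //; apply/ltnW.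
    by have := mem_last M b; rewrite inE => /predU1P[->|/(allP gt_b)].
  by rewrite !wt_peak // !big_cat !prod_nseq /=; ring.
rewrite /wt (negbTE not_ud) mulr0; case: ifP => // /updown_filter ud.
have [h y_h] : exists h, h \in y by case: (y) y_nil => // h t _; exists h; rewrite mem_head.
have max_gt : (v < maxs (nseq e v ++ y ++ nseq n v))%N.
  apply: leq_trans (allP gt_y h y_h) _.
  by rewrite (@leq_bigmax_seq _ _ xpredT (fun x => x)) // !mem_cat y_h orbT.
have := ud (predC1 v) (negbT (gtn_eqF max_gt)).
by rewrite !filter_cat !filter_nseq /= eqxx filter_predC1_gt // cats0 (negbTE not_ud).
Qed.

Section PermutationsOfMinimum.
Variables (v r : nat) (w : seq nat).
Hypotheses (w_nil : w != [::]) (gt_w : all (fun x => v < x)%N w).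

Lemma filter_perm_nseq_cat x : perm_eq x (nseq r v ++ w) -> perm_eq (filter (predC1 v) x) w.
Proof.
move=> /(@perm_filter _ _ _ (predC1 v)).
by rewrite filter_cat filter_nseq /= eqxx /= (filter_predC1_gt gt_w).
Qed.

Lemma wt_perm_nseq_cat x : perm_eq x (nseq r v ++ w) ->
  let y := filter (predC1 v) x in
  WT x = (if x == v :: y ++ nseq r.-1 v then wl v * wg v ^+ r.-1 * WT y else 0)
       + (if x == y ++ nseq r v then wg v ^+ r * WT y else 0).
Proof.
move=> px y; have py : perm_eq y w := filter_perm_nseq_cat px.
have [h [t ey]] : exists h t, y = h :: t.
  by move: w_nil; rewrite -!size_eq0 -(perm_size py); case: (y) => // h t; exists h, t.
have gt_y : all (fun x => v < x)%N y by rewrite (perm_all _ py).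
have y_nil : y != [::] by rewrite ey.
have vh : (v < h)%N by move: gt_y; rewrite ey => /andP[].
case: eqP => [x1 | not_x1].
  have x0 : (x == y ++ nseq r v) = false by rewrite {1}x1 ey eqseq_cons (ltn_eqF vh).
  by rewrite x0 addr0 {1}x1 -[v :: _]/(nseq 1 v ++ _) wt_strip_min ?expr1.
case: eqP => [x0 | not_x0].
  by rewrite add0r {1}x0 -[y ++ _]/(nseq 0 v ++ _) wt_strip_min ?expr0 ?mul1r.
rewrite addr0 /wt; case: ifP => // ud.
have ge_x : all (leq v) x.
  by rewrite (perm_all _ px) all_cat all_nseq leqnn orbT; apply: sub_all gt_w => z /ltnW.
have max_x : (v < maxs x)%N.
  apply: leq_trans vh (@leq_bigmax_seq _ _ xpredT (fun x => x) _ _ _) => //.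
  by have := mem_head h t; rewrite -ey mem_filter => /andP[].
have [e e_le1] := updown_split_min ud ge_x max_x.
have -> : count_mem v x = r.
  rewrite (permP px) count_cat count_nseq /= eqxx mul1n (count_memPn _) ?addn0 //.
  by apply/negP=> /(allP gt_w); rewrite ltnn.
by case: e e_le1 => [|[|//]] _ ex; [case: not_x0 | case: not_x1]; rewrite {1}ex ?subn0 ?subn1.
Qed.

Lemma sum_wt_perm_nseq_cat : (0 < r)%N ->
  \sum_(x <- permutations (nseq r v ++ w)) WT x =
  (wl v * wg v ^+ r.-1 + wg v ^+ r) * \sum_(y <- permutations w) WT y.
Proof.
move=> r_gt0.
rewrite (eq_big_seq _ (fun x xs => wt_perm_nseq_cat (etrans (esym (mem_permutations _ _)) xs))).
rewrite big_split /= mulrDl !mulr_sumr.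
have filter_perm x : x \in permutations (nseq r v ++ w) -> filter (predC1 v) x \in permutations w.
  by rewrite !mem_permutations; apply: filter_perm_nseq_cat.
have filter_cat_nseq e n y : y \in permutations w ->
    filter (predC1 v) (nseq e v ++ y ++ nseq n v) = y.
  rewrite mem_permutations => py; have gt_y : all (fun x => v < x)%N y by rewrite (perm_all _ py).
  by rewrite !filter_cat !filter_nseq /= eqxx /= (filter_predC1_gt gt_y) cats0.
have nseq_r : nseq r v = v :: nseq r.-1 v by rewrite -(prednK r_gt0).
have perm_cat_nseq n y : y \in permutations w -> perm_eq (y ++ nseq n v) (nseq n v ++ w).
  by rewrite mem_permutations => py; rewrite perm_catC perm_cat2l.
congr (_ + _).
  apply: (big_retract (g := fun y => v :: y ++ nseq r.-1 v) (h := filter (predC1 v)));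
    rewrite ?permutations_uniq //.
  - exact: filter_cat_nseq 1 r.-1.
  - by move=> y /(perm_cat_nseq r.-1); rewrite mem_permutations nseq_r /= perm_cons.
  - by move=> x /filter_perm.
apply: (big_retract (g := fun y => y ++ nseq r v) (h := filter (predC1 v)));
  rewrite ?permutations_uniq //.
- exact: filter_cat_nseq 0 r.
- by move=> y /(perm_cat_nseq r); rewrite mem_permutations.
- by move=> x /filter_perm.
Qed.

End PermutationsOfMinimum.

Lemma sum_wt_perm_nseq v r : (0 < r)%N ->
  \sum_(x <- permutations (nseq r v)) WT x = wg v ^+ r.-1.
Proof.
move=> r_gt0; have perms : perm_eq (permutations (nseq r v)) [:: nseq r v].
  apply: uniq_perm; rewrite ?permutations_uniq // => x.
  rewrite mem_permutations inE; apply/idP/eqP => [px|->//].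
  have /all_pred1P -> : all (pred1 v) x by rewrite (perm_all _ px) all_nseq /= eqxx orbT.
  by rewrite (perm_size px) size_nseq.
rewrite (perm_big _ perms) big_seq1 -(prednK r_gt0) /=.
have := @wt_peak [::] v (nseq r.-1 v) (erefl _) (path_geq_nseq r.-1 (leqnn v)).
by rewrite /= big_nil mul1r prod_nseq.
Qed.

End UpDownWeights.

Section Multiplicities.

Lemma count_nseq_cat (p : pred nat) r v s : count p (nseq r v ++ s) = r * p v + count p s.
Proof. by rewrite count_cat count_nseq mulnC. Qed.

Lemma size_undup_filter_nseq_cat (p : pred nat) r v s : v \notin s ->
  size (undup (filter p (nseq r v ++ s))) = (0 < r * p v) + size (undup (filter p s)).
Proof.
move=> vs; rewrite filter_cat filter_nseq mulnC.
have {vs} : v \notin filter p s by rewrite mem_filter negb_and vs orbT.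
elim: (r * p v) => // -[_ /= /negPf -> // | n IH vs] /=.
by rewrite inE eqxx /= IH.
Qed.

End Multiplicities.

Section ClosedForm.
Variables (R : comUnitRingType) (m : nat) (k l : nat -> nat) (q : R).
Local Open Scope ring_scope.
Local Notation wl := (wlt m k l q).
Local Notation wg := (wge m k l q).
Local Notation WT := (wt m k l q).

Definition qcoef (w : seq nat) : R :=
  (- q^-1) ^+ (ell1 m k l w - delta1 m k l w) * q ^+ (ell0 m k l w - delta0 m k l w)
  * (q - q^-1) ^+ (delta0 m k l w + delta1 m k l w).-1.

Lemma wlt_add_wge v : par1 m k l v = ~~ par0 m k l v -> wl v + wg v = q - q^-1.
Proof. by rewrite /wlt /wge => ->; case: par0 => /=; rewrite addrC. Qed.

Lemma qcoef_nseq v r : par1 m k l v = ~~ par0 m k l v -> (0 < r)%N ->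
  qcoef (nseq r v) = wg v ^+ r.-1.
Proof.
move=> par_v r_gt0; rewrite -[nseq r v]cats0 /qcoef /ell0 /ell1 /delta0 /delta1.
rewrite !count_nseq_cat !size_undup_filter_nseq_cat // /wge par_v.
by case: par0 => /=; rewrite ?muln0 ?muln1 r_gt0 ?addn0 ?subn0 ?subn1 expr0 ?mulr1 ?mul1r.
Qed.

Lemma qcoef_nseq_cat v r w : par1 m k l v = ~~ par0 m k l v -> (0 < r)%N -> v \notin w ->
  (0 < delta0 m k l w + delta1 m k l w)%N ->
  qcoef (nseq r v ++ w) = wg v ^+ r.-1 * (q - q^-1) * qcoef w.
Proof.
move=> par_v r_gt0 vw; rewrite /qcoef /ell0 /ell1 /delta0 /delta1.
rewrite !count_nseq_cat !size_undup_filter_nseq_cat // /wge par_v.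
have delta_le_ell (p : pred nat) : (size (undup (filter p w)) <= count p w)%N.
  by rewrite -size_filter size_undup.
have := delta_le_ell (par0 m k l); have := delta_le_ell (par1 m k l).
set e1 := count _ w; set e0 := count _ w; set d1 := size _; set d0 := size _.
move=> le1 le0 d_gt0.
case: par0 => /=; rewrite ?muln0 ?muln1 r_gt0 !add0n.
  have -> : (r + e0 - (1 + d0) = r.-1 + (e0 - d0))%N by lia.
  have -> : (1 + d0 + d1).-1 = (d0 + d1).-1.+1 by lia.
  by rewrite exprD exprS; ring.
have -> : (r + e1 - (1 + d1) = r.-1 + (e1 - d1))%N by lia.
have -> : (d0 + (1 + d1)).-1 = (d0 + d1).-1.+1 by lia.
by rewrite exprD exprS; ring.
Qed.

Lemma delta_gt0 w : w != [::] -> {in w, forall j, par1 m k l j = ~~ par0 m k l j} ->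
  (0 < delta0 m k l w + delta1 m k l w)%N.
Proof.
case: w => // h t _ /(_ h (mem_head h t)) par_h.
have size_gt0 (p : pred nat) : p h -> (0 < size (undup (filter p (h :: t))))%N.
  move=> ph; have : h \in undup (filter p (h :: t)) by rewrite mem_undup /= ph mem_head.
  by case: undup.
rewrite addn_gt0; apply/orP; case P0: (par0 m k l h); [left | right]; apply: size_gt0 => //.
by rewrite par_h P0.
Qed.

Lemma sum_wt_permutations w : sorted leq w -> w != [::] ->
  {in w, forall j, par1 m k l j = ~~ par0 m k l j} ->
  \sum_(x <- permutations w) WT x = qcoef w.
Proof.
have [n] := ubnP (size w); elim: n w => // n IH [//|v w1] size_lt sorted_w _ par_w.
have ge_v : all (leq v) (v :: w1) by rewrite /= leqnn (order_path_min leq_trans sorted_w).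
set w' := filter (predC1 v) (v :: w1); set r := count_mem v (v :: w1).
have ew : v :: w1 = nseq r v ++ w' := sorted_leq_nseq_filter sorted_w ge_v.
have r_gt0 : (0 < r)%N by rewrite /r /= eqxx.
have par_v := par_w v (mem_head v w1).
have gt_w' : all (fun x => v < x)%N w'.
  by apply/allP=> x; rewrite mem_filter ltn_neqAle eq_sym => /andP[/= -> /(allP ge_v)].
have [w'0 | w'_nil] := eqVneq w' [::].
  by rewrite ew w'0 cats0 sum_wt_perm_nseq // qcoef_nseq.
have par_w' : {in w', forall j, par1 m k l j = ~~ par0 m k l j}.
  by move=> x; rewrite mem_filter => /andP[_ /par_w].
have size_w' : (size w' < n)%N.
  move: size_lt; rewrite ew size_cat size_nseq -(prednK r_gt0) addSn ltnS.
  exact: leq_ltn_trans (leq_addl _ _).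
rewrite ew sum_wt_perm_nseq_cat // IH ?(sorted_filter leq_trans) // qcoef_nseq_cat //.
- rewrite -(wlt_add_wge par_v) -(prednK r_gt0) exprS /=; ring.
- by apply/negP=> /(allP gt_w'); rewrite ltnn.
- exact: delta_gt0.
Qed.

End ClosedForm.

Section Blocks.
Variables (m : nat) (k l : nat -> nat).
Local Notation d := (dd k l).

Lemma ddS a : d a.+1 = d a + (k a.+1 + l a.+1).
Proof. by rewrite /dd big_nat_recr. Qed.

Lemma leq_dd a b : a <= b -> d a <= d b.
Proof.
move=> /subnK <-; elim: (b - a) => //= n IH.
by rewrite addSn ddS (leq_trans IH) ?leq_addr.
Qed.

Lemma dd_block v : 0 < v <= d m -> exists2 a, 0 < a <= m & d a.-1 < v <= d a.
Proof.
case/andP=> v_gt0; elim: m => [|n IH]; first by rewrite /dd big_geq // leqNgt v_gt0.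
case: (leqP v (d n)) => [le_vn _ | lt_nv le_v]; last by exists n.+1 => //=; rewrite lt_nv.
by have [a /andP[a_gt0 a_le] Ha] := IH le_vn; exists a; rewrite ?a_gt0 ?leqW.
Qed.

Lemma dd_block_unique a b v : 0 < a -> 0 < b ->
  d a.-1 < v <= d a -> d b.-1 < v <= d b -> a = b.
Proof.
move=> a_gt0 b_gt0 /andP[lo_a hi_a] /andP[lo_b hi_b].
case: (ltngtP a b) => // [lt_ab | lt_ba].
  have : d a <= d b.-1 by apply: leq_dd; lia.
  lia.
have : d b <= d a.-1 by apply: leq_dd; lia.
lia.
Qed.

Lemma par1_neg_par0 v : 0 < v <= NN m k l -> par1 m k l v = ~~ par0 m k l v.
Proof.
move=> v_range; have [a /andP[a_gt0 a_le] /andP[lo_a hi_a]] := dd_block v_range.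
have db b : 0 < b -> d b = d b.-1 + (k b + l b).
  by move=> b_gt0; rewrite -[in LHS](prednK b_gt0) ddS prednK.
have a_iota : a \in iota 1 m by rewrite mem_iota add1n ltnS a_gt0.
have block_a b : b \in iota 1 m -> d b.-1 < v -> v <= d b.-1 + (k b + l b) -> b = a.
  rewrite mem_iota => /andP[b_gt0 _] lo hi.
  by apply: (dd_block_unique (v := v) b_gt0 a_gt0); rewrite ?lo_a ?hi_a ?lo // db.
have -> : par0 m k l v = (v <= d a.-1 + k a).
  apply/hasP/idP => [[b b_iota /andP[lo hi]] | hi]; last by exists a; rewrite // lo_a hi.
  by rewrite -(block_a b) //; apply: (leq_trans hi); rewrite addnA leq_addr.
apply/hasP/idP => [[b b_iota /andP[lo hi]] | lo]; last first.
  by exists a; rewrite // hi_a andbT; move: lo; rewrite -ltnNge (db a a_gt0); lia.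
have := b_iota; rewrite mem_iota => /andP[/db db_b _].
by rewrite -(block_a b) // -?ltnNge; lia.
Qed.

End Blocks.

Section SortedTuples.
Variables (V : nmodType) (N t : nat).
Local Notation leo := (fun x y : 'I_N => x <= y).

Lemma leo_total : total leo. Proof. by move=> x y; apply: leq_total. Qed.
Lemma leo_trans : transitive leo. Proof. by move=> x y z; apply: leq_trans. Qed.
Lemma leo_anti : antisymmetric leo. Proof. by move=> x y /anti_leq /val_inj. Qed.

Lemma succ_ord_inj : injective (fun i : 'I_N => (val i).+1).
Proof. by move=> x y [] /val_inj. Qed.

Lemma sorted_idx (u : t.-tuple 'I_N) : sorted leq (idx u) = sorted leo u.
Proof. by rewrite /idx sorted_map. Qed.

Lemma idx_inj : injective (@idx N t).
Proof. by move=> x y /(inj_map succ_ord_inj) /val_inj. Qed.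

Lemma perm_idx_sort (s : t.-tuple 'I_N) : perm_eq (idx (sort_tuple leo s)) (idx s).
Proof. by apply: perm_map; rewrite /= perm_sort. Qed.

Lemma map_succ_pmap_insub (x : seq nat) : all (fun n => 0 < n <= N) x ->
  map (fun i : 'I_N => (val i).+1) (pmap (fun n => insub n.-1) x) = x.
Proof.
elim: x => //= n x IH /andP[/andP[n_gt0 n_le] ran_x].
by rewrite insubT /= ?IH ?prednK // -ltnS prednK.
Qed.

Lemma sum_sort_tuple_fiber (u : t.-tuple 'I_N) (F : seq nat -> V) : sorted leo u ->
  (\sum_(s : t.-tuple 'I_N | sort_tuple leo s == u) F (idx s) =
   \sum_(x <- permutations (idx u)) F x)%R.
Proof.
move=> sorted_u; rewrite -big_filter -(big_map (@idx N t) xpredT).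
apply: perm_big; apply: uniq_perm.
- by rewrite map_inj_uniq ?filter_uniq ?index_enum_uniq //; apply: idx_inj.
- exact: permutations_uniq.
move=> x; rewrite mem_permutations; apply/mapP/idP => [[s]|px].
  by rewrite mem_filter => /andP[/eqP <- _] ->; rewrite perm_sym perm_idx_sort.
have ran_x : all (fun n => 0 < n <= N) x.
  by rewrite (perm_all _ px); apply/allP=> n /mapP[i _ ->]; apply: ltn_ord.
pose y : seq 'I_N := pmap (fun n => insub n.-1) x.
have ey : map (fun i : 'I_N => (val i).+1) y = x := map_succ_pmap_insub ran_x.
have size_y : size y == t.
  by rewrite -(size_map (fun i : 'I_N => (val i).+1)) ey (perm_size px) size_map size_tuple.
exists (Tuple size_y); last by rewrite /idx /= ey.
rewrite mem_filter mem_index_enum andbT; apply/eqP/val_inj => /=.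
have py : perm_eq y u by apply: (perm_map_inj succ_ord_inj); rewrite ey.
by rewrite (perm_sortP leo_total leo_trans leo_anti _ _ py) (sorted_sort leo_trans sorted_u).
Qed.

End SortedTuples.

Unset Implicit Arguments.
Local Open Scope ring_scope.

Theorem mainTheorem2 (R : comUnitRingType) (m : nat) (k l : nat -> nat)
    (q : R) (Q : nat -> R) (z : nat -> R) (hm : (1 <= m)%N) (hq : q \is a GRing.unit)
    (t a : nat) (ht : (1 <= t)%N) (ha : (1 <= a <= m)%N) :
  qat m k l q Q z a t =
  \sum_(s : t.-tuple 'I_(NN m k l))
     wt m k l q (idx s) * Q (colseq m k l (idx s)) ^+ a * zseq m k l z (idx s).
Proof.
pose leo := fun x y : 'I_(NN m k l) => (x <= y)%N.
rewrite [RHS](partition_big (sort_tuple leo) (fun u => sorted leq (idx u))); last first.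
  by move=> s _; rewrite sorted_idx sort_sorted //; apply: leo_total.
apply: eq_bigr => u sorted_u.
have fiber_const s : sort_tuple leo s == u ->
    Q (colseq m k l (idx s)) ^+ a * zseq m k l z (idx s) =
    Q (colseq m k l (idx u)) ^+ a * zseq m k l z (idx u).
  move=> /eqP <-; have ps := perm_idx_sort s.
  by rewrite /colseq /maxs /zseq /ell1 (perm_big _ ps) (permP ps) (perm_big _ ps).
rewrite (eq_bigr (fun s => wt m k l q (idx s) *
  (Q (colseq m k l (idx u)) ^+ a * zseq m k l z (idx u)))); last first.
  by move=> s /fiber_const <-; rewrite mulrA.
rewrite -mulr_suml sum_sort_tuple_fiber -?sorted_idx // sum_wt_permutations //.
- by rewrite /qcoef; ring.
- by rewrite -size_eq0 size_map size_tuple -lt0n.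
- by move=> v /mapP[i _ ->]; apply: par1_neg_par0; rewrite /= ltn_ord.
Qed.
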